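(* Let $0<\theta\le 3/4$ and $f(x)=\log\frac{\cosh(x/2)+\theta\sinh(x/2)}{\cosh(x/2)-\theta\sinh(x/2)}$. Then $|f(x)-f(y)|\le 2f(|x-y|/2)$ for all $x,y\in\mathbb R$. Moreover, there exists a universal constant $\kappa>1/100$ (independent of $\theta$) such that for all constants $C_1,C_2\ge1$ with $C_2\ge1+(\tfrac12C_1-1)(1-\theta^2)$ and all $\delta>0$, $$f(\delta)\big(1+4\kappa(1-\theta)C_1\,\delta\tanh(\delta/2)\big)\le C_2\,\theta\,\delta.$$ *)

From Stdlib Require Import Reals.
Open Scope R_scope.

Definition ftheta (theta x : R) : R :=
  ln ((cosh (x / 2) + theta * sinh (x / 2)) / (cosh (x / 2) - theta * sinh (x / 2))).

From Stdlib Require Import Reals Lra Psatz.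
From Coquelicot Require Import Coquelicot.
Open Scope R_scope.

(* Write q = exp x.  Clearing the factor exp(x/2) shows
     ftheta theta x = ln (mobius theta q),
     mobius theta q = ((1+theta) q + (1-theta)) / ((1-theta) q + (1+theta)),
   and with t = (q-1)/(q+1) = tanh(x/2) this Moebius map equals
   (1 + theta t)/(1 - theta t), so that ftheta theta x = phi (theta tanh(x/2))
   where phi s = ln((1+s)/(1-s)) = 2 artanh s; in particular phi (tanh(d/2)) = d.

   Part 1 (valid for every 0 <= theta <= 1) is an algebraic inequality for the
   Moebius map: mobius(p m^2) <= mobius(m)^2 mobius(p) for p > 0, m >= 1, the
   difference being a positive multiple of (m^2-1)(mp-1)^2; together with
   monotonicity of ftheta this gives |f x - f y| <= 2 f(|x-y|/2).

   Part 2 (with kappa = 1/99) compares phi with the odd Taylor polynomial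
   phi_lower (from below) and with phi_upper s = 2s + (2/3)s^3/(1-s^2) (from
   above), both by monotonicity of a difference with nonnegative derivative.
   Substituting these bounds reduces the claim to a polynomial inequality in
   s = t^2 and P = theta^2, which is concave in P and so is checked at
   P = 0 and P = 9/16.  A final case split on C1 <= 2 absorbs C1 and C2. *)

Lemma le_of_nonneg_derive (g g' : R -> R) (a b : R) :
  a < b ->
  (forall c, a <= c <= b -> is_derive g c (g' c)) ->
  (forall c, a < c < b -> 0 <= g' c) ->
  g a <= g b.
Proof.
  intros Hab Hder Hpos.
  destruct (MVT_cor2 g g' a b Hab) as [c [Hmvt Hc]].
  - intros c Hc. apply is_derive_Reals, Hder, Hc.
  - specialize (Hpos c Hc). nra.
Qed.

Lemma exp_ge_1 x : 0 <= x -> 1 <= exp x.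
Proof. intros Hx. pose proof (exp_ineq1_le x). lra. Qed.

Lemma exp_split x y : exp x = exp y * exp ((x - y) / 2) ^ 2.
Proof. simpl. rewrite Rmult_1_r, <- !exp_plus. f_equal. field. Qed.

Definition mobius (theta q : R) : R :=
  ((1 + theta) * q + (1 - theta)) / ((1 - theta) * q + (1 + theta)).

Lemma ftheta_mobius theta x :
  0 <= theta <= 1 -> ftheta theta x = ln (mobius theta (exp x)).
Proof.
  intros Hth. unfold ftheta, mobius, cosh, sinh.
  replace (exp x) with (exp (x / 2) * exp (x / 2)) by (rewrite <- exp_plus; f_equal; field).
  rewrite exp_Ropp. pose proof (exp_pos (x / 2)) as He.
  f_equal. field. repeat split; nra.
Qed.

Lemma mobius_pos theta q : 0 <= theta <= 1 -> 0 < q -> 0 < mobius theta q.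
Proof. intros Hth Hq. unfold mobius. apply Rdiv_lt_0_compat; nra. Qed.

Lemma mobius_1 theta : mobius theta 1 = 1.
Proof. unfold mobius. field. lra. Qed.

Lemma mobius_le_compat theta p q :
  0 <= theta <= 1 -> 0 < p <= q -> mobius theta p <= mobius theta q.
Proof.
  intros Hth Hpq.
  assert (Hdiff : mobius theta q - mobius theta p =
    4 * theta * (q - p) / (((1 - theta) * q + (1 + theta)) * ((1 - theta) * p + (1 + theta)))).
  { unfold mobius. field. split; nra. }
  cut (0 <= mobius theta q - mobius theta p); [lra |]. rewrite Hdiff.
  apply Rdiv_le_0_compat; [nra | apply Rmult_lt_0_compat; nra].
Qed.

Lemma mobius_sq_bound theta p m :
  0 <= theta <= 1 -> 0 < p -> 1 <= m ->
  mobius theta (p * m ^ 2) <= mobius theta m ^ 2 * mobius theta p.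
Proof.
  intros Hth Hp Hm.
  assert (Hpm : 0 < p * m ^ 2) by (apply Rmult_lt_0_compat; nra).
  assert (Hdiff : mobius theta m ^ 2 * mobius theta p - mobius theta (p * m ^ 2) =
    4 * theta * (1 - theta ^ 2) * (m ^ 2 - 1) * (m * p - 1) ^ 2 /
    (((1 - theta) * (p * m ^ 2) + (1 + theta)) * ((1 - theta) * m + (1 + theta)) ^ 2
      * ((1 - theta) * p + (1 + theta)))).
  { unfold mobius. field. repeat split; nra. }
  cut (0 <= mobius theta m ^ 2 * mobius theta p - mobius theta (p * m ^ 2)); [lra |].
  rewrite Hdiff. apply Rdiv_le_0_compat.
  - apply Rmult_le_pos; [| apply pow2_ge_0].
    apply Rmult_le_pos; [apply Rmult_le_pos |]; nra.
  - apply Rmult_lt_0_compat; [apply Rmult_lt_0_compat; [| apply pow_lt] |]; nra.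
Qed.

Lemma ftheta_nonneg theta x : 0 <= theta <= 1 -> 0 <= x -> 0 <= ftheta theta x.
Proof.
  intros Hth Hx. rewrite ftheta_mobius, <- ln_1 by exact Hth.
  apply ln_le; [lra |]. rewrite <- (mobius_1 theta) at 1.
  apply mobius_le_compat; [exact Hth | pose proof (exp_ge_1 x Hx); lra].
Qed.

Lemma ftheta_le_compat theta x y :
  0 <= theta <= 1 -> y <= x -> ftheta theta y <= ftheta theta x.
Proof.
  intros Hth Hxy. rewrite !ftheta_mobius by exact Hth.
  apply ln_le; [apply mobius_pos, exp_pos; exact Hth |].
  apply mobius_le_compat; [exact Hth |]. rewrite (exp_split x y).
  pose proof (exp_pos y). pose proof (exp_ge_1 ((x - y) / 2) ltac:(lra)).
  assert (1 <= exp ((x - y) / 2) ^ 2) by nra. split; nra.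
Qed.

(* Part 1 for y <= x: take logarithms in mobius_sq_bound with p = exp y. *)
Lemma ftheta_sub_le theta x y :
  0 <= theta <= 1 -> y <= x ->
  ftheta theta x - ftheta theta y <= 2 * ftheta theta ((x - y) / 2).
Proof.
  intros Hth Hxy. rewrite !ftheta_mobius, (exp_split x y) by exact Hth.
  pose proof (exp_pos y) as Hp. pose proof (exp_ge_1 ((x - y) / 2) ltac:(lra)) as Hm.
  set (p := exp y) in *. set (m := exp ((x - y) / 2)) in *.
  assert (HMp := mobius_pos theta p Hth Hp).
  assert (HMm := mobius_pos theta m Hth ltac:(lra)).
  assert (Hln : ln (mobius theta m ^ 2 * mobius theta p) =
                2 * ln (mobius theta m) + ln (mobius theta p)).
  { rewrite ln_mult, ln_pow by (try apply pow_lt; lra). simpl INR. ring. }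
  cut (ln (mobius theta (p * m ^ 2)) <= ln (mobius theta m ^ 2 * mobius theta p)); [lra |].
  apply ln_le; [apply mobius_pos; [exact Hth | apply Rmult_lt_0_compat, pow_lt; lra] |].
  apply mobius_sq_bound; assumption.
Qed.

(* For x < y the left side is <= 0 <= the right side, by monotonicity. *)
Lemma ftheta_diff_le theta x y :
  0 <= theta <= 1 ->
  ftheta theta x - ftheta theta y <= 2 * ftheta theta (Rabs (x - y) / 2).
Proof.
  intros Hth. destruct (Rle_or_lt y x) as [Hxy | Hxy].
  - rewrite Rabs_right by lra. apply ftheta_sub_le; assumption.
  - pose proof (ftheta_le_compat theta y x Hth ltac:(lra)).
    pose proof (ftheta_nonneg theta (Rabs (x - y) / 2) Hth).
    pose proof (Rabs_pos (x - y)). nra.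
Qed.

Lemma ftheta_abs_diff_le theta x y :
  0 <= theta <= 1 ->
  Rabs (ftheta theta x - ftheta theta y) <= 2 * ftheta theta (Rabs (x - y) / 2).
Proof.
  intros Hth. apply Rabs_le. split.
  - pose proof (ftheta_diff_le theta y x Hth) as H. rewrite Rabs_minus_sym in H. lra.
  - apply ftheta_diff_le, Hth.
Qed.

Definition phi (s : R) : R := ln ((1 + s) / (1 - s)).
Definition phi_lower (s : R) : R := 2 * (s + s ^ 3 / 3 + s ^ 5 / 5 + s ^ 7 / 7).
Definition phi_upper (s : R) : R := 2 * s + 2 / 3 * s ^ 3 / (1 - s ^ 2).

Lemma phi_0 : phi 0 = 0.
Proof. unfold phi. replace ((1 + 0) / (1 - 0)) with 1 by field. apply ln_1. Qed.

(* (phi - phi_lower)' = 2 s^8 / (1 - s^2) >= 0. *)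
Lemma phi_lower_le s : 0 <= s < 1 -> phi_lower s <= phi s.
Proof.
  intros [Hs0 Hs1]. destruct (Req_dec s 0) as [-> | Hs].
  - rewrite phi_0. unfold phi_lower. lra.
  - enough (H : phi 0 - phi_lower 0 <= phi s - phi_lower s).
    { rewrite phi_0 in H. unfold phi_lower in H |- *. lra. }
    apply (le_of_nonneg_derive (fun y => phi y - phi_lower y)
             (fun y => 2 * y ^ 8 / (1 - y ^ 2))); [lra | |].
    + intros c Hc. unfold phi, phi_lower. auto_derive.
      * repeat split; try lra. apply Rdiv_lt_0_compat; lra.
      * field. repeat split; nra.
    + intros c Hc. apply Rdiv_le_0_compat; [apply Rmult_le_pos, pow_le | ]; nra.
Qed.

(* (phi_upper - phi)' = (4/3) s^4 / (1 - s^2)^2 >= 0. *)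
Lemma phi_le_upper s : 0 <= s < 1 -> phi s <= phi_upper s.
Proof.
  intros [Hs0 Hs1]. destruct (Req_dec s 0) as [-> | Hs].
  - rewrite phi_0. unfold phi_upper. replace (2 / 3 * 0 ^ 3 / (1 - 0 ^ 2)) with 0 by field. lra.
  - enough (H : phi_upper 0 - phi 0 <= phi_upper s - phi s).
    { rewrite phi_0 in H. unfold phi_upper in H |- *.
      replace (2 / 3 * 0 ^ 3 / (1 - 0 ^ 2)) with 0 in H by field. lra. }
    apply (le_of_nonneg_derive (fun y => phi_upper y - phi y)
             (fun y => 4 / 3 * y ^ 4 / (1 - y ^ 2) ^ 2)); [lra | |].
    + intros c Hc. unfold phi, phi_upper. auto_derive.
      * repeat split; try lra; try nra. apply Rdiv_lt_0_compat; lra.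
      * field. repeat split; nra.
    + intros c Hc. apply Rdiv_le_0_compat; [apply Rmult_le_pos, pow_le | apply pow_lt]; nra.
Qed.

Lemma tanh_half_exp d : tanh (d / 2) = (exp d - 1) / (exp d + 1).
Proof.
  unfold tanh, cosh, sinh.
  replace (exp d) with (exp (d / 2) * exp (d / 2)) by (rewrite <- exp_plus; f_equal; field).
  rewrite exp_Ropp. pose proof (exp_pos (d / 2)) as He.
  field. split; nra.
Qed.

Lemma tanh_half_bounds d : 0 < d -> 0 < tanh (d / 2) < 1.
Proof.
  intros Hd. rewrite tanh_half_exp.
  pose proof (exp_ineq1_le d) as He.
  split; [apply Rdiv_lt_0_compat; lra | apply Rlt_div_l; lra].
Qed.

Lemma ftheta_phi theta d :
  0 <= theta <= 1 -> ftheta theta d = phi (theta * tanh (d / 2)).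
Proof.
  intros Hth. rewrite ftheta_mobius, tanh_half_exp by exact Hth.
  pose proof (exp_pos d) as He. unfold phi, mobius. f_equal. field. repeat split; nra.
Qed.

(* The case theta = 1: ftheta 1 is the identity. *)
Lemma phi_tanh_half d : phi (tanh (d / 2)) = d.
Proof.
  rewrite <- (Rmult_1_l (tanh (d / 2))), <- ftheta_phi, ftheta_mobius by lra.
  replace (mobius 1 (exp d)) with (exp d) by (unfold mobius; field).
  apply ln_exp.
Qed.

(* The polynomial inequality behind part 2, in s = t^2 and P = theta^2.  The
   expression is s times a concave quadratic in P; it is written as the linear
   interpolation between its values G0 (at P = 0) and G1 (at P = 9/16) plus the
   nonnegative correction P (9/16 - P) c. *)
Lemma series_key_poly s P : 0 <= s <= 1 -> 0 <= P <= 9 / 16 ->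
  0 <= 2 * (1 + s / 3 + s ^ 2 / 5 + s ^ 3 / 7) *
         (3 * (1 - P * s) - 8 / 99 * (1 - P) * s * (6 - 4 * P * s))
       - (6 - 4 * P * s).
Proof.
  intros Hs HP.
  set (G0 := 34/33 + 434/495 * s + 766/1155 * s ^ 2 - 32/231 * s ^ 3).
  set (G1 := 119/264 + 367/3960 * s + 463/3080 * s ^ 2 - 4721/9240 * s ^ 3 + 1/44 * s ^ 4).
  set (c := 64/99 * s + 64/297 * s ^ 2 + 64/495 * s ^ 3 + 64/693 * s ^ 4).
  assert (Hconcave : 2 * (1 + s / 3 + s ^ 2 / 5 + s ^ 3 / 7) *
         (3 * (1 - P * s) - 8 / 99 * (1 - P) * s * (6 - 4 * P * s)) - (6 - 4 * P * s)
    = s * ((1 - 16/9 * P) * G0 + 16/9 * P * G1 + P * (9/16 - P) * c)).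
  { unfold G0, G1, c. field. }
  assert (Hs2 : 0 <= s ^ 2 <= s) by nra.
  assert (Hs3 : 0 <= s ^ 3 <= s ^ 2) by nra.
  assert (Hs4 : 0 <= s ^ 4) by nra.
  assert (HG0 : 0 <= G0) by (unfold G0; nra).
  assert (HG1 : 0 <= G1) by (unfold G1; nra).
  assert (Hc : 0 <= c) by (unfold c; nra).
  rewrite Hconcave. apply Rmult_le_pos; [lra |].
  assert (0 <= (1 - 16/9 * P) * G0) by nra.
  assert (0 <= 16/9 * P * G1) by nra.
  assert (0 <= P * (9/16 - P) * c) by (apply Rmult_le_pos; nra).
  lra.
Qed.

(* Part 2 with phi(theta t) and d replaced by their bounds phi_upper(theta t)
   and phi_lower t; it is series_key_poly after clearing denominators. *)
Lemma phi_bounds_key theta t :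
  0 < theta <= 3 / 4 -> 0 < t < 1 ->
  phi_upper (theta * t) * (1 + 8 / 99 * (1 - theta ^ 2) * t * phi_lower t)
    <= theta * phi_lower t.
Proof.
  intros Hth Ht.
  assert (Hs : 0 < theta * t < 3 / 4) by (split; nra).
  assert (HD : 0 < 1 - (theta * t) ^ 2) by nra.
  assert (HE := series_key_poly (t ^ 2) (theta ^ 2) ltac:(split; nra) ltac:(split; nra)).
  assert (Hid : theta * phi_lower t
      - phi_upper (theta * t) * (1 + 8 / 99 * (1 - theta ^ 2) * t * phi_lower t)
    = theta * t / (3 * (1 - (theta * t) ^ 2)) *
      (2 * (1 + t ^ 2 / 3 + (t ^ 2) ^ 2 / 5 + (t ^ 2) ^ 3 / 7) *
         (3 * (1 - theta ^ 2 * t ^ 2) - 8 / 99 * (1 - theta ^ 2) * t ^ 2 * (6 - 4 * theta ^ 2 * t ^ 2))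
       - (6 - 4 * theta ^ 2 * t ^ 2))).
  { unfold phi_lower, phi_upper. field. lra. }
  cut (0 <= theta * phi_lower t
      - phi_upper (theta * t) * (1 + 8 / 99 * (1 - theta ^ 2) * t * phi_lower t)); [lra |].
  rewrite Hid. apply Rmult_le_pos; [apply Rdiv_le_0_compat |]; nra.
Qed.

Lemma phi_upper_le theta t :
  0 < theta <= 3 / 4 -> 0 <= t < 1 -> phi_upper (theta * t) <= 3 * theta.
Proof.
  intros Hth Ht. unfold phi_upper.
  assert (Hs : 0 <= theta * t <= 3 / 4) by (split; nra).
  assert (Hsq : (theta * t) ^ 2 <= 9 / 16) by nra.
  assert (HD : 7 / 16 <= 1 - (theta * t) ^ 2) by lra.
  assert (Hcube : (theta * t) ^ 3 <= 9 / 16 * theta).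
  { replace ((theta * t) ^ 3) with ((theta * t) ^ 2 * t * theta) by ring. nra. }
  assert (2 / 3 * (theta * t) ^ 3 / (1 - (theta * t) ^ 2) <= theta).
  { apply Rle_div_l; nra. }
  nra.
Qed.

(* The two estimates on a = ftheta theta d that part 2 needs: a <= 3 theta, and
   the case C1 = 2, C2 = 1 of the weighted inequality.  From phi_bounds_key,
   U (1 + k t d) - theta d = [U (1 + k t L) - theta L] + (d - L)(U k t - theta)
   with U = phi_upper(theta t), L = phi_lower t <= d and U k t <= theta. *)
Lemma ftheta_core theta d :
  0 < theta <= 3 / 4 -> 0 < d ->
  0 <= ftheta theta d <= 3 * theta /\
  ftheta theta d * (1 + 8 / 99 * (1 - theta) * d * tanh (d / 2)) <= theta * d.
Proof.
  intros Hth Hd.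
  pose proof (ftheta_nonneg theta d ltac:(lra) ltac:(lra)) as Ha0.
  pose proof (tanh_half_bounds d Hd) as Ht.
  pose proof (phi_tanh_half d) as Hphi.
  rewrite ftheta_phi in * by lra.
  set (t := tanh (d / 2)) in *. set (a := phi (theta * t)) in *.
  assert (HaU : a <= phi_upper (theta * t)) by (apply phi_le_upper; split; nra).
  assert (HU3 := phi_upper_le theta t Hth ltac:(lra)).
  assert (HLd : phi_lower t <= d) by (rewrite <- Hphi; apply phi_lower_le; lra).
  assert (Hkey := phi_bounds_key theta t Hth Ht).
  set (U := phi_upper (theta * t)) in *. set (L := phi_lower t) in *.
  split; [lra |].
  assert (Hdt : 0 <= d * t) by nra.
  assert (Hth2 : 0 <= theta * (1 - theta)) by nra.
  assert (HUa : a * (1 + 8 / 99 * (1 - theta) * d * t)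
                <= U * (1 + 8 / 99 * (1 - theta ^ 2) * d * t)).
  { apply Rmult_le_compat; nra. }
  assert (HUk : U * (8 / 99 * (1 - theta ^ 2) * t) <= theta).
  { assert (0 <= 8 / 99 * (1 - theta ^ 2) * t <= 8 / 99) by (split; nra). nra. }
  assert (Hregroup : U * (1 + 8 / 99 * (1 - theta ^ 2) * d * t) - theta * d =
    (U * (1 + 8 / 99 * (1 - theta ^ 2) * t * L) - theta * L)
    + (d - L) * (U * (8 / 99 * (1 - theta ^ 2) * t) - theta)) by ring.
  nra.
Qed.

(* Final bookkeeping: the C1 = 2 estimate of ftheta_core yields the weighted
   inequality for all admissible C1, C2 (the excess of C1 over 2 is paid by the
   excess of C2 over 1). *)
Lemma weighted_bound theta d t a C1 C2 :
  0 < theta <= 3 / 4 -> 0 < d -> 0 < t < 1 -> 1 <= C1 -> 1 <= C2 ->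
  C2 >= 1 + (C1 / 2 - 1) * (1 - theta ^ 2) ->
  0 <= a <= 3 * theta -> a * (1 + 8 / 99 * (1 - theta) * d * t) <= theta * d ->
  a * (1 + 4 * (1 / 99) * (1 - theta) * C1 * d * t) <= C2 * theta * d.
Proof.
  intros Hth Hd Ht HC1 HC2 HC Ha Hcore.
  assert (Hsplit : a * (1 + 4 * (1 / 99) * (1 - theta) * C1 * d * t) =
    a * (1 + 8 / 99 * (1 - theta) * d * t) + 4 / 99 * (C1 - 2) * (a * t) * ((1 - theta) * d))
    by field.
  assert (Hat : 0 <= a * t <= 3 * theta) by (split; nra).
  assert (Hdth : 0 <= (1 - theta) * d) by nra.
  assert (Hthd : 0 < theta * d) by nra.
  destruct (Rle_or_lt C1 2) as [HC1le | HC1gt].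
  - assert (0 <= (2 - C1) * (a * t) * ((1 - theta) * d))
      by (apply Rmult_le_pos; [apply Rmult_le_pos |]; lra).
    assert (theta * d <= C2 * theta * d) by nra.
    lra.
  - assert (Hcorr : 4 / 99 * (C1 - 2) * (a * t) * ((1 - theta) * d)
                    <= theta * d * ((C1 / 2 - 1) * (1 - theta ^ 2))).
    { replace (theta * d * ((C1 / 2 - 1) * (1 - theta ^ 2)))
        with ((C1 - 2) * (theta * (1 + theta) / 2) * ((1 - theta) * d)) by field.
      apply Rmult_le_compat_r; [exact Hdth |]. nra. }
    assert (theta * d * (1 + (C1 / 2 - 1) * (1 - theta ^ 2)) <= C2 * theta * d) by nra.
    nra.
Qed.

Theorem mainTheorem11 :
  (forall theta : R, 0 < theta <= 3 / 4 ->
     forall x y : R,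
       Rabs (ftheta theta x - ftheta theta y) <= 2 * ftheta theta (Rabs (x - y) / 2))
  /\
  (exists kappa : R, kappa > 1 / 100 /\
     forall theta : R, 0 < theta <= 3 / 4 ->
     forall C1 C2 : R, 1 <= C1 -> 1 <= C2 ->
       C2 >= 1 + (C1 / 2 - 1) * (1 - theta ^ 2) ->
     forall delta : R, 0 < delta ->
       ftheta theta delta * (1 + 4 * kappa * (1 - theta) * C1 * delta * tanh (delta / 2))
         <= C2 * theta * delta).
Proof.
  split.
  - intros theta Hth x y. apply ftheta_abs_diff_le. lra.
  - exists (1 / 99). split; [lra |].
    intros theta Hth C1 C2 HC1 HC2 HC delta Hdelta.
    destruct (ftheta_core theta delta Hth Hdelta) as [Ha Hcore].
    apply weighted_bound; try assumption.
    apply tanh_half_bounds, Hdelta.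
Qed.
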